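(* Let $a\in C[0,1]$ change sign in $(0,1)$, and let $\Omega_-:=a^{-1}((-\infty,0))\subset[0,1]$. For every $\lambda<\pi^2$, let $u_\lambda$ be a positive solution of $$-u''=\lambda u+a(x)u^2\ \text{ in }(0,1),\qquad u(0)=u(1)=0.$$ Then $$\lim_{\lambda\downarrow-\infty}u_\lambda(x)=0\quad\text{for all }x\in\Omega_-,$$ uniformly on compact subintervals of $\Omega_-$. *)

From Stdlib Require Import Reals Lra.
From Coquelicot Require Import Coquelicot.
Open Scope R_scope.

Definition continuous_on_01 (a : R -> R) : Prop :=
  forall x, 0 <= x <= 1 ->
    filterlim a (within (fun y => 0 <= y <= 1) (locally x)) (locally (a x)).

Definition changes_sign_01 (a : R -> R) : Prop :=
  (exists x, 0 < x < 1 /\ 0 < a x) /\ (exists x, 0 < x < 1 /\ a x < 0).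

Definition Omega_minus (a : R -> R) (x : R) : Prop := 0 <= x <= 1 /\ a x < 0.

Definition positive_solution (a : R -> R) (lam : R) (u : R -> R) : Prop :=
  continuous_on_01 u /\
  (forall x, 0 < x < 1 ->
     ex_derive u x /\ ex_derive (Derive u) x /\
     - Derive (Derive u) x = lam * u x + a x * (u x) ^ 2) /\
  u 0 = 0 /\ u 1 = 0 /\
  (forall x, 0 < x < 1 -> 0 < u x).

(* Where a <= -al < 0, a positive solution with mu = -lam satisfies
   u'' >= mu u + al u^2.  Start at a point x with u x >= eps and move in the
   direction in which u does not decrease (reflecting x |-> -x if necessary).
   The linear term makes u double over every step of length s with mu s^2 >= 2,
   so for mu large u exceeds any fixed level within a fixed distance; the
   quadratic term then forces blow-up (al u(q) s^2 < 6 whenever [q, q + 2 s]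
   stays in the region, a Keller-Osserman bound) before that distance is
   reached.  If instead the boundary is reached first, u would be positive,
   nondecreasing and tend to 0 there.  By continuity of a, al and the distance
   can be taken uniform on a compact subinterval of Omega_-. *)

From Stdlib Require Import Reals Lra.
From Coquelicot Require Import Coquelicot.
Open Scope R_scope.

Lemma pow_unbounded (x b : R) : 1 < x -> exists n : nat, (1 <= n)%nat /\ b <= x ^ n.
Proof.
  intros Hx.
  destruct (Pow_x_infinity x ltac:(rewrite Rabs_right; lra) b) as [N HN].
  exists (S N). split; [apply le_n_S, le_0_n|].
  specialize (HN (S N) (le_S _ _ (le_n N))).
  rewrite Rabs_right in HN by (apply Rle_ge, pow_le; lra). lra.
Qed.

Lemma is_derive_nonneg_le (f df : R -> R) (x y : R) : x <= y ->
  (forall z, x <= z <= y -> is_derive f z (df z)) ->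
  (forall z, x <= z <= y -> 0 <= df z) -> f x <= f y.
Proof.
  intros Hxy Hd Hpos.
  destruct (MVT_gen f x y df) as [c [Hc Heq]];
    rewrite ?Rmin_left, ?Rmax_right in * by lra.
  - intros z Hz. apply Hd; lra.
  - intros z Hz. apply continuity_pt_filterlim, (ex_derive_continuous (V := R_NormedModule)).
    exists (df z). apply Hd; lra.
  - assert (0 <= df c * (y - x)) by (apply Rmult_le_pos; [apply Hpos|]; lra).
    lra.
Qed.

Lemma is_derive2_lower_bound (f g h : R -> R) (q r c : R) : q <= r ->
  (forall x, q <= x <= r -> is_derive f x (g x)) ->
  (forall x, q <= x <= r -> is_derive g x (h x)) ->
  (forall x, q <= x <= r -> c <= h x) -> 0 <= g q ->
  f q + c * (r - q) ^ 2 / 2 <= f r.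
Proof.
  intros Hqr Hf Hg Hh Hgq.
  assert (Hslope : forall x, q <= x <= r -> c * (x - q) <= g x).
  { intros x Hx.
    assert (g q - c * (q - q) <= g x - c * (x - q)); [|lra].
    apply (is_derive_nonneg_le (fun z => g z - c * (z - q)) (fun z => h z - c)); [lra| |].
    - intros z Hz. apply (is_derive_minus g (fun z => c * (z - q))).
      + apply Hg; lra.
      + auto_derive; [trivial | ring].
    - intros z Hz. specialize (Hh z ltac:(lra)). lra. }
  assert (f q - c * (q - q) ^ 2 / 2 <= f r - c * (r - q) ^ 2 / 2); [|lra].
  apply (is_derive_nonneg_le (fun z => f z - c * (z - q) ^ 2 / 2)
           (fun z => g z - c * (z - q))); [lra| |].
  - intros z Hz. apply (is_derive_minus f (fun z => c * (z - q) ^ 2 / 2)).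
    + apply Hf; lra.
    + auto_derive; [trivial | simpl; field].
  - intros z Hz. specialize (Hslope z Hz). lra.
Qed.

Lemma is_derive_reflect (f : R -> R) (x l : R) :
  is_derive f (- x) l -> is_derive (fun z => f (- z)) x (- l).
Proof.
  intros Hf.
  replace (- l) with (scal (-1) l) by (unfold scal; simpl; unfold mult; simpl; ring).
  apply (is_derive_comp f Ropp); [exact Hf|].
  auto_derive; [trivial | ring].
Qed.

Definition positive_supersolution (P : R -> Prop) (mu al : R) (f g h : R -> R) :=
  forall x, P x -> is_derive f x (g x) /\ is_derive g x (h x) /\
    mu * f x + al * f x ^ 2 <= h x /\ 0 < f x.

Section Supersolution.
Variables (f g h : R -> R) (p e mu al : R).
Hypothesis Hsup : positive_supersolution (fun x => p <= x <= e) mu al f g h.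
Hypothesis Hg_p : 0 <= g p.
Hypothesis Hmu : 0 <= mu.
Hypothesis Hal : 0 <= al.

Lemma supersolution_deriv_nonneg x : p <= x <= e -> 0 <= g x.
Proof.
  intros Hx.
  assert (g p <= g x); [|lra].
  apply (is_derive_nonneg_le g h); [lra| |]; intros z Hz;
    destruct (Hsup z ltac:(lra)) as [_ [Hg [Hh Hf]]]; [exact Hg|].
  assert (0 <= al * f z ^ 2) by (apply Rmult_le_pos; [|apply pow2_ge_0]; lra).
  nra.
Qed.

Lemma supersolution_nondecreasing x y : p <= x -> x <= y -> y <= e -> f x <= f y.
Proof.
  intros Hpx Hxy Hye.
  apply (is_derive_nonneg_le f g); [lra| |]; intros z Hz.
  - apply Hsup; lra.
  - apply supersolution_deriv_nonneg; lra.
Qed.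

Lemma supersolution_growth q r c : p <= q -> q <= r -> r <= e ->
  c <= mu * f q + al * f q ^ 2 -> f q + c * (r - q) ^ 2 / 2 <= f r.
Proof.
  intros Hpq Hqr Hre Hc.
  apply (is_derive2_lower_bound f g h); [lra| | | |].
  - intros x Hx. apply Hsup; lra.
  - intros x Hx. apply Hsup; lra.
  - intros x Hx.
    destruct (Hsup x ltac:(lra)) as [_ [_ [Hh _]]].
    destruct (Hsup q ltac:(lra)) as [_ [_ [_ Hfq]]].
    assert (f q <= f x) by (apply supersolution_nondecreasing; lra).
    assert (f q ^ 2 <= f x ^ 2) by nra.
    nra.
  - apply supersolution_deriv_nonneg; lra.
Qed.

Lemma supersolution_doubling s : 0 < s -> 2 <= mu * s ^ 2 ->
  forall (k : nat) q, p <= q -> q + INR k * s <= e -> 2 ^ k * f q <= f (q + INR k * s).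
Proof.
  intros Hs Hmus k. induction k as [|k IH]; intros q Hpq Hqe.
  - rewrite Rmult_0_l, Rplus_0_r, pow_O. lra.
  - rewrite S_INR in *. assert (Hk := pos_INR k).
    destruct (Hsup q ltac:(nra)) as [_ [_ [_ Hfq]]].
    assert (Hsq : 0 <= al * f q ^ 2) by (apply Rmult_le_pos; [|apply pow2_ge_0]; lra).
    assert (Hstep := supersolution_growth q (q + s) (mu * f q)
                       Hpq ltac:(lra) ltac:(nra) ltac:(lra)).
    replace (q + s - q) with s in Hstep by ring.
    specialize (IH (q + s) ltac:(lra) ltac:(lra)).
    replace (q + (INR k + 1) * s) with (q + s + INR k * s) by ring.
    assert (H2 : 2 * f q <= f (q + s)) by nra.
    assert (Hpow : 0 < 2 ^ k) by (apply pow_lt; lra).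
    simpl. nra.
Qed.

Lemma supersolution_keller_osserman q s : p <= q -> 0 < s -> q + 2 * s <= e ->
  al * f q * s ^ 2 < 6.
Proof.
  (* Each step of length s quadruples f and keeps [al * f q * s ^ 2 >= 6] for the
     halved step, so f would be unbounded at q + 2 s. *)
  assert (Hquadruple : forall (k : nat) q s, p <= q -> 0 < s -> q + 2 * s <= e ->
            6 <= al * f q * s ^ 2 -> 4 ^ k * f q <= f (q + 2 * s)).
  { intros k. induction k as [|k IH]; intros q' s' Hpq Hs Hqe H6.
    - rewrite pow_O, Rmult_1_l. apply supersolution_nondecreasing; lra.
    - destruct (Hsup q' ltac:(lra)) as [_ [_ [_ Hfq]]].
      assert (Hmf : 0 <= mu * f q') by (apply Rmult_le_pos; lra).
      assert (Hstep := supersolution_growth q' (q' + s') (al * f q' ^ 2)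
                         Hpq ltac:(lra) ltac:(lra) ltac:(lra)).
      replace (q' + s' - q') with s' in Hstep by ring.
      assert (H4 : 4 * f q' <= f (q' + s')) by nra.
      specialize (IH (q' + s') (s' / 2) ltac:(lra) ltac:(lra) ltac:(lra) ltac:(nra)).
      replace (q' + s' + 2 * (s' / 2)) with (q' + 2 * s') in IH by field.
      assert (Hpow : 0 < 4 ^ k) by (apply pow_lt; lra).
      simpl. nra. }
  intros Hpq Hs Hqe.
  destruct (Rlt_or_le (al * f q * s ^ 2) 6) as [Hlt|H6]; [exact Hlt|exfalso].
  destruct (Hsup q ltac:(lra)) as [_ [_ [_ Hfq]]].
  destruct (pow_unbounded 4 (2 * f (q + 2 * s) / f q) ltac:(lra)) as [k [_ Hk]].
  specialize (Hquadruple k q s Hpq Hs Hqe H6).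
  apply (Rmult_le_compat_r (f q)) in Hk; [|lra].
  replace (2 * f (q + 2 * s) / f q * f q) with (2 * f (q + 2 * s)) in Hk by (field; lra).
  assert (0 < f (q + 2 * s)) by (apply Hsup; lra).
  lra.
Qed.

End Supersolution.

Lemma positive_supersolution_small_interior (eps dl al : R) : 0 < eps -> 0 < dl -> 0 < al ->
  exists M, 0 <= M /\ forall f g h p mu, M <= mu ->
    positive_supersolution (fun x => p <= x <= p + dl) mu al f g h -> 0 <= g p -> f p < eps.
Proof.
  intros Heps Hdl Hal.
  destruct (pow_unbounded 2 (96 / (al * dl ^ 2 * eps)) ltac:(lra)) as [k [Hk1 Hk]].
  assert (HkR : 1 <= INR k) by (apply (le_INR 1); exact Hk1).
  set (s := dl / (2 * INR k)).
  assert (Hs : 0 < s) by (unfold s; apply Rdiv_lt_0_compat; lra).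
  exists (2 / s ^ 2). split; [apply Rlt_le, Rdiv_lt_0_compat; [lra | nra]|].
  intros f g h p mu HM Hsup Hgp.
  assert (Hmu : 2 <= mu * s ^ 2).
  { apply (Rmult_le_compat_r (s ^ 2)) in HM; [|nra].
    replace (2 / s ^ 2 * s ^ 2) with 2 in HM by (field; lra). exact HM. }
  assert (Hmu0 : 0 <= mu) by (assert (0 < s ^ 2) by nra; nra).
  destruct (Rlt_or_le (f p) eps) as [Hlt|Hge]; [exact Hlt|exfalso].
  assert (Hks : INR k * s = dl / 2) by (unfold s; field; lra).
  assert (Hdouble := supersolution_doubling f g h p (p + dl) mu al Hsup Hgp Hmu0
                       ltac:(lra) s Hs Hmu k p ltac:(lra) ltac:(lra)).
  assert (Hko := supersolution_keller_osserman f g h p (p + dl) mu al Hsup Hgp Hmu0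
                   ltac:(lra) (p + dl / 2) (dl / 4) ltac:(lra) ltac:(lra) ltac:(lra)).
  rewrite Hks in Hdouble.
  assert (Hpow : 96 <= 2 ^ k * (al * dl ^ 2 * eps)).
  { apply (Rmult_le_compat_r (al * dl ^ 2 * eps)) in Hk;
      [|apply Rlt_le, Rmult_lt_0_compat; [|lra]; apply Rmult_lt_0_compat; nra].
    replace (96 / (al * dl ^ 2 * eps) * (al * dl ^ 2 * eps)) with 96 in Hk
      by (field; split; [|split]; nra).
    exact Hk. }
  assert (Hpk : 0 < 2 ^ k) by (apply pow_lt; lra).
  assert (2 ^ k * eps <= f (p + dl / 2)) by nra.
  assert (al * dl ^ 2 * (2 ^ k * eps) <= al * dl ^ 2 * f (p + dl / 2))
    by (apply Rmult_le_compat_l; nra).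
  nra.
Qed.

Lemma positive_supersolution_small (eps dl al : R) : 0 < eps -> 0 < dl -> 0 < al ->
  exists M, forall f g h p e mu, M <= mu -> p < e ->
    positive_supersolution (fun x => p <= x <= p + dl /\ x < e) mu al f g h ->
    0 <= g p ->
    (forall eta, 0 < eta -> exists r, r < e /\ forall x, r < x < e -> f x < eta) ->
    f p < eps.
Proof.
  intros Heps Hdl Hal.
  destruct (positive_supersolution_small_interior eps dl al Heps Hdl Hal) as [M [HM0 HM]].
  exists M. intros f g h p e mu HMmu Hpe Hsup Hgp Hvanish.
  destruct (Rlt_or_le (p + dl) e) as [Hin|Hout].
  - apply (HM f g h p mu HMmu); [|exact Hgp].
    intros x Hx. apply Hsup. lra.
  - exfalso.
    destruct (Hsup p ltac:(lra)) as [_ [_ [_ Hfp]]].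
    destruct (Hvanish (f p) Hfp) as [r [Hre Hr]].
    set (y := Rmax p ((r + e) / 2)).
    assert (Hy : p <= y /\ r < y < e) by (unfold y, Rmax; destruct Rle_dec; lra).
    assert (f p <= f y); [|specialize (Hr y ltac:(lra)); lra].
    apply (supersolution_nondecreasing f g h p y mu al); try lra.
    intros x Hx. apply Hsup. lra.
Qed.

Lemma positive_supersolution_reflect (P : R -> Prop) (mu al : R) (f g h : R -> R) :
  positive_supersolution P mu al f g h ->
  positive_supersolution (fun z => P (- z)) mu al
    (fun z => f (- z)) (fun z => - g (- z)) (fun z => h (- z)).
Proof.
  intros Hsup z Hz. destruct (Hsup (- z) Hz) as [Hf [Hg [Hh Hpos]]].
  split; [|split; [|split]]; try assumption.
  - apply is_derive_reflect. exact Hf.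
  - rewrite <- (Ropp_involutive (h (- z))).
    apply (is_derive_opp (fun z => g (- z))), is_derive_reflect. exact Hg.
Qed.

Lemma continuous_on_01_ball (u : R -> R) : continuous_on_01 u ->
  forall x, 0 <= x <= 1 -> forall eps, 0 < eps -> exists dl, 0 < dl /\
    forall y, 0 <= y <= 1 -> Rabs (y - x) < dl -> Rabs (u y - u x) < eps.
Proof.
  intros Hc x Hx eps Heps.
  destruct (Hc x Hx (ball (u x) eps) (locally_ball (u x) (mkposreal eps Heps))) as [dl Hdl].
  exists dl. split; [apply cond_pos|]. intros y Hy Hyx. exact (Hdl y Hyx Hy).
Qed.

Definition clamp01 (y : R) : R := Rmax 0 (Rmin 1 y).

Lemma clamp01_in (y : R) : 0 <= clamp01 y <= 1.
Proof. unfold clamp01, Rmax, Rmin; repeat destruct Rle_dec; lra. Qed.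

Lemma clamp01_id (y : R) : 0 <= y <= 1 -> clamp01 y = y.
Proof. unfold clamp01, Rmax, Rmin; repeat destruct Rle_dec; lra. Qed.

Lemma clamp01_lipschitz (x y : R) : Rabs (clamp01 y - clamp01 x) <= Rabs (y - x).
Proof.
  unfold clamp01, Rmax, Rmin, Rabs; repeat destruct Rle_dec; repeat destruct Rcase_abs; lra.
Qed.

Lemma continuity_pt_clamp01 (a : R -> R) : continuous_on_01 a ->
  forall x, continuity_pt (fun y => a (clamp01 y)) x.
Proof.
  intros Ha x eps Heps.
  destruct (continuous_on_01_ball a Ha (clamp01 x) (clamp01_in x) eps Heps) as [dl [Hdl Hball]].
  exists dl. split; [exact Hdl|]. intros y [_ Hyx].
  apply Hball; [apply clamp01_in|].
  eapply Rle_lt_trans; [apply clamp01_lipschitz | exact Hyx].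
Qed.

Lemma uniformly_negative_near (a : R -> R) (c d : R) : continuous_on_01 a -> c <= d ->
  (forall x, c <= x <= d -> Omega_minus a x) ->
  exists al dl, 0 < al /\ 0 < dl /\ forall x y, c <= x <= d -> 0 <= y <= 1 ->
    Rabs (y - x) <= dl -> a y <= - al.
Proof.
  intros Ha Hcd Hom.
  set (A := fun y => a (clamp01 y)).
  assert (HA : forall x, 0 <= x <= 1 -> A x = a x)
    by (intros x Hx; apply (f_equal a), clamp01_id, Hx).
  destruct (continuity_ab_maj A c d Hcd (fun z _ => continuity_pt_clamp01 a Ha z))
    as [xm [Hmax Hxm]].
  destruct (Hom xm Hxm) as [Hxm01 Hneg].
  destruct (Heine A (fun z => 0 <= z <= 1) (compact_P3 0 1)
              (fun z _ => continuity_pt_clamp01 a Ha z) (mkposreal (- a xm / 2) ltac:(lra)))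
    as [dl Hdl].
  exists (- a xm / 2), (dl / 2).
  split; [lra|]. split; [apply Rdiv_lt_0_compat; [apply cond_pos | lra]|].
  intros x y Hx Hy Hyx.
  destruct (Hom x Hx) as [Hx01 _].
  assert (Hclose := Hdl y x Hy Hx01 ltac:(assert (H := cond_pos dl); lra)). simpl in Hclose.
  assert (Hbound := Hmax x Hx).
  rewrite HA, HA in Hclose by assumption. rewrite HA, HA in Hbound by assumption.
  apply Rabs_def2 in Hclose. lra.
Qed.

Lemma positive_solution_supersolution (a : R -> R) (lam al : R) (v : R -> R) (P : R -> Prop) :
  positive_solution a lam v -> (forall y, P y -> 0 < y < 1 /\ a y <= - al) ->
  positive_supersolution P (- lam) al v (Derive v) (Derive (Derive v)).
Proof.
  intros [_ [Hode [_ [_ Hpos]]]] HP y Hy.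
  destruct (HP y Hy) as [Hy01 Hay].
  destruct (Hode y Hy01) as [Hv [Hv' Heq]].
  split; [apply Derive_correct, Hv|]. split; [apply Derive_correct, Hv'|].
  split; [|exact (Hpos y Hy01)].
  assert (0 <= v y ^ 2) by apply pow2_ge_0.
  nra.
Qed.

Lemma positive_solution_vanishes_at_1 (a : R -> R) (lam : R) (v : R -> R) :
  positive_solution a lam v ->
  forall eta, 0 < eta -> exists r, r < 1 /\ forall x, r < x < 1 -> v x < eta.
Proof.
  intros [Hc [_ [_ [Hv1 _]]]] eta Heta.
  destruct (continuous_on_01_ball v Hc 1 ltac:(lra) eta Heta) as [dl [Hdl Hball]].
  exists (Rmax 0 (1 - dl)). split; [apply Rmax_lub_lt; lra|]. intros x Hx.
  assert (Hl := Rmax_l 0 (1 - dl)). assert (Hr := Rmax_r 0 (1 - dl)).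
  assert (Hx1 := Hball x ltac:(lra) ltac:(rewrite Rabs_left; lra)).
  rewrite Hv1, Rminus_0_r in Hx1. apply Rabs_def2 in Hx1. lra.
Qed.

Lemma positive_solution_vanishes_at_0 (a : R -> R) (lam : R) (v : R -> R) :
  positive_solution a lam v ->
  forall eta, 0 < eta -> exists r, 0 < r /\ forall x, 0 < x < r -> v x < eta.
Proof.
  intros [Hc [_ [Hv0 _]]] eta Heta.
  destruct (continuous_on_01_ball v Hc 0 ltac:(lra) eta Heta) as [dl [Hdl Hball]].
  exists (Rmin dl 1). split; [apply Rmin_pos; lra|]. intros x Hx.
  assert (Hdl' := Rmin_l dl 1). assert (H1 := Rmin_r dl 1).
  assert (Hx0 := Hball x ltac:(lra) ltac:(rewrite Rabs_right; lra)).
  rewrite Hv0, Rminus_0_r in Hx0. apply Rabs_def2 in Hx0. lra.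
Qed.

Lemma positive_solutions_vanish_on_compact (a : R -> R) (c d eps : R) :
  continuous_on_01 a -> c <= d -> (forall x, c <= x <= d -> Omega_minus a x) -> 0 < eps ->
  exists L, forall lam v, lam < L -> positive_solution a lam v ->
    forall x, c <= x <= d -> Rabs (v x) < eps.
Proof.
  intros Ha Hcd Hom Heps.
  destruct (uniformly_negative_near a c d Ha Hcd Hom) as [al [dl [Hal [Hdl Hneg]]]].
  destruct (positive_supersolution_small eps dl al Heps Hdl Hal) as [M HM].
  exists (- M). intros lam v Hlam Hv x Hx.
  destruct (Hom x Hx) as [Hx01 _].
  assert (Hsup : positive_supersolution (fun y => 0 < y < 1 /\ Rabs (y - x) <= dl)
                   (- lam) al v (Derive v) (Derive (Derive v))).
  { apply (positive_solution_supersolution a lam); [exact Hv|].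
    intros y [Hy Hyx]. split; [exact Hy|]. apply (Hneg x y Hx); [lra | exact Hyx]. }
  pose proof Hv as [_ [_ [Hv0 [Hv1 Hpos]]]].
  destruct (Req_dec x 0) as [->|Hx0]; [rewrite Hv0, Rabs_R0; exact Heps|].
  destruct (Req_dec x 1) as [->|Hx1]; [rewrite Hv1, Rabs_R0; exact Heps|].
  assert (Hxin : 0 < x < 1) by lra.
  rewrite Rabs_right by (specialize (Hpos x Hxin); lra).
  (* Follow v from x in the direction in which it does not decrease. *)
  destruct (Rle_or_lt 0 (Derive v x)) as [Hd|Hd].
  - apply (HM v (Derive v) (Derive (Derive v)) x 1 (- lam)); try lra.
    + intros y Hy. apply Hsup. split; [lra|]. rewrite Rabs_right; lra.
    + apply (positive_solution_vanishes_at_1 a lam v Hv).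
  - rewrite <- (Ropp_involutive x).
    apply (HM (fun z => v (- z)) (fun z => - Derive v (- z)) (fun z => Derive (Derive v) (- z))
             (- x) 0 (- lam)); try lra.
    + intros z Hz. apply (positive_supersolution_reflect _ _ _ _ _ _ Hsup).
      split; [lra|]. rewrite Rabs_left1; lra.
    + rewrite Ropp_involutive. lra.
    + intros eta Heta.
      destruct (positive_solution_vanishes_at_0 a lam v Hv eta Heta) as [r [Hr Hsmall]].
      exists (- r). split; [lra|]. intros z Hz. apply Hsmall. lra.
Qed.

Theorem theorem3p1 (a : R -> R) (u : R -> R -> R)
  (Ha_cont : continuous_on_01 a)
  (Ha_sign : changes_sign_01 a)
  (Hu : forall lam, lam < PI ^ 2 -> positive_solution a lam (u lam)) :
  (* pointwise convergence to 0 on Omega_- *)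
  (forall x, Omega_minus a x ->
     forall eps, 0 < eps -> exists L, forall lam, lam < L -> lam < PI ^ 2 ->
       Rabs (u lam x) < eps) /\
  (* uniform convergence on compact subintervals [c,d] of Omega_- *)
  (forall c d, c <= d -> (forall x, c <= x <= d -> Omega_minus a x) ->
     forall eps, 0 < eps -> exists L, forall lam, lam < L -> lam < PI ^ 2 ->
       forall x, c <= x <= d -> Rabs (u lam x) < eps).
Proof.
  assert (Huniform : forall c d, c <= d -> (forall x, c <= x <= d -> Omega_minus a x) ->
     forall eps, 0 < eps -> exists L, forall lam, lam < L -> lam < PI ^ 2 ->
       forall x, c <= x <= d -> Rabs (u lam x) < eps).
  { intros c d Hcd Hom eps Heps.
    destruct (positive_solutions_vanish_on_compact a c d eps Ha_cont Hcd Hom Heps) as [L HL].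
    exists L. intros lam HlamL Hlampi. exact (HL lam (u lam) HlamL (Hu lam Hlampi)). }
  split; [|exact Huniform].
  intros x Hx eps Heps.
  assert (Hxx : forall y, x <= y <= x -> Omega_minus a y)
    by (intros y Hy; replace y with x by lra; exact Hx).
  destruct (Huniform x x (Rle_refl x) Hxx eps Heps) as [L HL].
  exists L. intros lam HlamL Hlampi. apply (HL lam HlamL Hlampi). lra.
Qed.
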